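(* Let $H$ be a connected graph with vertices $v_1,\ldots,v_d$, let $\Gamma$ be a finite group with identity $e$, and let $D=\{\gamma_1,\ldots,\gamma_d\}\subseteq\Gamma$ with $|D|=d$. Let $\widetilde{H}$ be the graph with vertex set $\Gamma$ and edge set $\{(\gamma\gamma_i,\gamma\gamma_j): \gamma\in\Gamma,\ v_iv_j\in E(H)\}$, and for $\gamma\in\Gamma$ let $\widetilde{H}_\gamma$ be the subgraph of $\widetilde{H}$ induced by $\{\gamma\gamma_1,\ldots,\gamma\gamma_d\}$. Then: a) If $(\Gamma,D)$ satisfies condition $\mathcal{G}(2)$ then $\widetilde{H}$ is a cluster of $|\Gamma|$ copies of $H$ (namely of the subgraphs $\widetilde{H}_\gamma$, $\gamma\in\Gamma$). b) If $(\Gamma,D)$ satisfies condition $\mathcal{G}(p)$ then the cluster-girth of $\widetilde{H}$ (with respect to the parts $\widetilde{H}_\gamma$, $\gamma\in\Gamma$) is at least $p+1$. c) The connected components of $\widetilde{H}$ are pairwise isomorphic, and the component containing $e$ is a Cayley graph of some subgroup of $\Gamma$.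
   Context: For $p\geq 1$, the pair $(\Gamma,D)$ satisfies condition $\mathcal{R}(p)$ if for every sequence of indices $i_0,\ldots,i_{2p-1}\in\{1,\ldots,d\}$ the equality $\gamma_{i_0}\gamma_{i_1}^{-1}\gamma_{i_2}\gamma_{i_3}^{-1}\cdots\gamma_{i_{2p-2}}\gamma_{i_{2p-1}}^{-1}=e$ implies $i_l=i_{l+1}$ for some $l\in\{0,\ldots,2p-1\}$ (indices modulo $2p$). It satisfies $\mathcal{G}(p)$ if it satisfies $\mathcal{R}(1),\ldots,\mathcal{R}(p)$. A finite graph $X$ is a cluster of induced subgraphs $X_1,\ldots,X_k$ (its parts) if $X=X_1\cup\cdots\cup X_k$ and for all $i\neq j$, $X_i\cap X_j$ is empty or a single vertex. The cluster-girth (with respect to parts $X_1,\ldots,X_k$) is the smallest $l\geq 3$ such that there exist pairwise distinct vertices $v_0,\ldots,v_{l-1}$ and pairwise distinct indices $i_0,\ldots,i_{l-1}$ with $v_j\in V(X_{i_{j-1}})\cap V(X_{i_j})$ for $j=0,\ldots,l-1$ (indices modulo $l$); it is infinite if no such cycle exists. *)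

From mathcomp Require Import all_boot all_fingroup.
Set Implicit Arguments. Unset Strict Implicit. Unset Printing Implicit Defensive.
Local Open Scope group_scope.

(* Condition R(p) for (Gamma, D) with D = {gam i | i < d}:
   for every sequence i_0, ..., i_{2p-1} (the first 2p values of f),
   gam i_0 * (gam i_1)^-1 * ... * gam i_{2p-2} * (gam i_{2p-1})^-1 = 1
   implies i_l = i_{l+1} for some l, indices modulo 2p. *)
Definition condR (gT : finGroupType) (d : nat) (gam : 'I_d -> gT) (p : nat) : Prop :=
  forall f : nat -> 'I_d,
    \prod_(k < p) (gam (f k.*2) * (gam (f k.*2.+1))^-1) = 1 ->
    exists2 l, l < p.*2 & f l = f (l.+1 %% p.*2).

Definition condG (gT : finGroupType) (d : nat) (gam : 'I_d -> gT) (p : nat) : Prop :=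
  forall q, 1 <= q <= p -> condR gam q.

Definition htilde (gT : finGroupType) (d : nat) (h : rel 'I_d) (gam : 'I_d -> gT)
  : rel gT :=
  fun x y => [exists g : gT, exists i : 'I_d, exists j : 'I_d,
               [&& h i j, x == g * gam i & y == g * gam j]].

(* Vertex set of H~_g (the part is the induced subgraph of H~ on this set). *)
Definition hpart (gT : finGroupType) (d : nat) (gam : 'I_d -> gT) (g : gT) : {set gT} :=
  [set g * gam i | i : 'I_d].

Definition is_cluster (V I : finType) (e : rel V) (P : I -> {set V}) : Prop :=
  [/\ (forall v : V, exists i, v \in P i),
      (forall x y, e x y -> exists i, x \in P i /\ y \in P i)
    & (forall i j, i != j -> #|P i :&: P j| <= 1)].

Definition iso_to_induced (T V : finType) (h : rel T) (e : rel V) (A : {set V}) : Prop :=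
  exists f : T -> V, [/\ injective f, [set f t | t : T] = A
                       & forall s t, h s t = e (f s) (f t)].

Definition iso_induced (V : finType) (e : rel V) (A B : {set V}) : Prop :=
  exists f : V -> V, [/\ {in A &, injective f}, f @: A = B
                       & {in A &, forall x y, e x y = e (f x) (f y)}].

(* A cluster-cycle of length l w.r.t. parts P: pairwise distinct vertices
   v_0..v_{l-1} and pairwise distinct indices i_0..i_{l-1} with
   v_j in P (i_{j-1}) and v_j in P (i_j), indices modulo l. *)
Definition cluster_cycle (V I : finType) (P : I -> {set V}) (l : nat) : Prop :=
  exists (v : nat -> V) (idx : nat -> I),
    [/\ {in [pred j | j < l] &, injective v},
        {in [pred j | j < l] &, injective idx}
      & forall j, j < l -> v j \in P (idx ((j + l).-1 %% l)) /\ v j \in P (idx j)].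

(* The cluster-girth (smallest l >= 3 with a cluster-cycle of length l,
   infinite if none) is at least n. *)
Definition cluster_girth_ge (V I : finType) (P : I -> {set V}) (n : nat) : Prop :=
  forall l, 3 <= l -> l < n -> ~ cluster_cycle P l.

Definition component (V : finType) (e : rel V) (x : V) : {set V} :=
  [set y | connect e x y].

Definition is_cayley_graph_of (gT : finGroupType) (e : rel gT) (A : {set gT})
  (K : {group gT}) : Prop :=
  A = K /\
  exists S : {set gT}, [/\ S \subset K, S^-1 = S, 1 \notin S
                         & {in K &, forall x y, e x y = (x^-1 * y \in S)}].

From mathcomp Require Import all_boot all_fingroup zify.

Set Implicit Arguments.
Unset Strict Implicit.
Unset Printing Implicit Defensive.
Local Open Scope group_scope.

(* The graph H~ is the Cayley graph of Gamma for the connection set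
   S = {gam_i^-1 gam_j | v_i v_j in E(H)}, so left translations are graph
   automorphisms; this gives c), with the component of 1 the subgroup it spans.
   For a) and b), write a cluster-cycle of length l as
   v_j = x_{j-1} gam_(a_j) = x_j gam_(b_j) with parts x_j; then
   prod_j gam_(a_j) gam_(b_j)^-1 telescopes to 1, and R(l) forces a_j = b_j
   (two consecutive parts coincide) or b_j = a_(j+1) (two consecutive vertices
   coincide).  For l = 2 this says that two distinct parts share at most one
   vertex, and that the part g carries exactly one copy of H. *)

Definition cpred (l j : nat) : nat := (j + l).-1 %% l.

Lemma cpredS l k : k < l -> cpred l k.+1 = k.
Proof.
move=> lt_kl; rewrite /cpred (_ : (k.+1 + l).-1 = k + l); last by lia.
by rewrite modnDr modn_small.
Qed.

Lemma cpred_modS l k : k < l -> cpred l (k.+1 %% l) = k.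
Proof.
move=> lt_kl; have [lt_Skl | eq_Skl] : k.+1 < l \/ k.+1 = l by lia.
  by rewrite modn_small // cpredS.
by rewrite eq_Skl modnn /cpred add0n modn_small; lia.
Qed.

Lemma cpred_neq l j : 1 < l -> j < l -> cpred l j != j.
Proof.
case: j => [|k] lt1l lt_jl; first by rewrite /cpred add0n modn_small; lia.
by rewrite cpredS //; lia.
Qed.

Lemma prod_telescope (gT : finGroupType) (x : nat -> gT) n :
  \prod_(k < n) ((x k)^-1 * x k.+1) = (x 0)^-1 * x n.
Proof.
elim: n => [|n IHn]; first by rewrite big_ord0 mulVg.
by rewrite big_ord_recr /= IHn -mulgA (mulgA (x n)) mulgV mul1g.
Qed.

Section CayleyGraph.
Variables (gT : finGroupType) (d : nat) (h : rel 'I_d) (gam : 'I_d -> gT).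

Local Notation Ht := (htilde h gam).

Definition connection_set : {set gT} :=
  [set z | [exists i, exists j, h i j && (z == (gam i)^-1 * gam j)]].

Lemma htildeE x y : Ht x y = (x^-1 * y \in connection_set).
Proof.
rewrite inE; apply/existsP/existsP.
  move=> [g /existsP [i /existsP [j /and3P [hij /eqP -> /eqP ->]]]].
  exists i; apply/existsP; exists j; rewrite hij /=.
  by rewrite invMg -mulgA (mulgA g^-1) mulVg mul1g.
move=> [i /existsP [j /andP [hij /eqP E]]].
exists (x * (gam i)^-1); apply/existsP; exists i; apply/existsP; exists j.
by rewrite hij mulgKV eqxx /= -mulgA -E mulgA mulgV mul1g.
Qed.

Lemma htildeMl k x y : Ht (k * x) (k * y) = Ht x y.
Proof. by rewrite !htildeE invMg -mulgA (mulgA k^-1) mulVg mul1g. Qed.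

Lemma connect_htildeMl k x y : connect Ht (k * x) (k * y) = connect Ht x y.
Proof.
suff connectMl k' x' y' : connect Ht x' y' -> connect Ht (k' * x') (k' * y').
  by apply/idP/idP => [/(connectMl k^-1)|]; rewrite ?mulKg //; apply: connectMl.
move=> /connectP [p pth ->]; apply/connectP; exists [seq k' * z | z <- p].
  by elim: p x' pth => //= z p IHp x' /andP [exz pz]; rewrite htildeMl exz IHp.
by rewrite last_map.
Qed.

Lemma component_mulg k x :
  [set k * z | z in component Ht x] = component Ht (k * x).
Proof.
apply/setP => z; rewrite [RHS]inE; apply/imsetP/idP => [[w] | cxz].
  by rewrite inE -(connect_htildeMl k) => cxw ->.
by exists (k^-1 * z); rewrite ?mulKVg // inE -(connect_htildeMl k) mulKVg.
Qed.

Lemma iso_induced_component x y :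
  iso_induced Ht (component Ht x) (component Ht y).
Proof.
exists (fun z => y * x^-1 * z); split; first by move=> u w _ _ /mulgI.
  by rewrite component_mulg mulgKV.
by move=> u w _ _; rewrite htildeMl.
Qed.

Lemma group_set_component1 : group_set (component Ht 1).
Proof.
apply/group_setP; split; first by rewrite inE connect0.
move=> u w; rewrite !inE => c1u c1w; apply: connect_trans c1u _.
by rewrite -{1}(mulg1 u) connect_htildeMl.
Qed.

Lemma connection_set_sub_component1 : connection_set \subset component Ht 1.
Proof.
by apply/subsetP => s Ss; rewrite inE; apply: connect1; rewrite htildeE invg1 mul1g.
Qed.

Lemma invg_connection_set : symmetric h -> connection_set^-1 = connection_set.
Proof.
move=> h_sym; apply/setP => z; rewrite mem_invg !inE.
apply/existsP/existsP => -[i /existsP [j /andP [hij /eqP E]]];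
  exists j; apply/existsP; exists i; rewrite h_sym hij /=.
  by rewrite -(invgK z) E invMg invgK.
by rewrite E invMg invgK.
Qed.

Lemma one_notin_connection_set :
  irreflexive h -> injective gam -> 1 \notin connection_set.
Proof.
move=> h_irr gam_inj; rewrite inE.
apply/negP => /existsP [i /existsP [j /andP [hij /eqP E]]].
have eq_ij : gam i = gam j by apply: (mulgI (gam i)^-1); rewrite mulVg E.
by rewrite (gam_inj _ _ eq_ij) h_irr in hij.
Qed.

End CayleyGraph.

Section TranslatedCopies.
Variables (gT : finGroupType) (d : nat) (gam : 'I_d -> gT).
Hypothesis gam_inj : injective gam.

Lemma condR_interleave l (a b : nat -> 'I_d) :
  condR gam l -> \prod_(k < l) (gam (a k) * (gam (b k))^-1) = 1 ->
  exists2 k, k < l & a k = b k \/ b k = a (k.+1 %% l).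
Proof.
pose f n := if odd n then b n./2 else a n./2.
have f_even k : f k.*2 = a k by rewrite /f odd_double doubleK.
have f_odd k : f k.*2.+1 = b k by rewrite /f /= odd_double uphalf_double.
move=> HR prod1; have [|m lt_m2l eq_f] := HR f.
  by under eq_bigr do rewrite f_even f_odd.
have [k [def_m | def_m]] : exists k, m = k.*2 \/ m = k.*2.+1.
  by case: (odd m) (odd_double_half m) => /= E; exists m./2;
    [right | left]; rewrite -{1}E ?add1n.
- exists k; first by rewrite -ltn_double -def_m.
  by left; rewrite -f_even -f_odd -def_m eq_f def_m modn_small //; lia.
- exists k; first by rewrite -ltn_double; lia.
  by right; rewrite -f_odd -f_even -def_m eq_f def_m -doubleS -!muln2 -muln_modl.
Qed.

Hypothesis HR2 : condR gam 2.

Lemma condR2_translate_eq {g g' : gT} {a b c e : 'I_d} :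
  g * gam a = g' * gam b -> g * gam c = g' * gam e -> a != c -> g = g'.
Proof.
move=> Eab Ece neq_ac.
have Gab : gam a * (gam b)^-1 = g^-1 * g'.
  by rewrite -(mulKg g (gam a)) Eab !mulgA mulgK.
have Gec : gam e * (gam c)^-1 = g'^-1 * g.
  by rewrite -(mulKg g' (gam e)) -Ece !mulgA mulgK.
have [|k lt_k2] := @condR_interleave 2 (nth a [:: a; e]) (nth a [:: b; c]) HR2.
  by rewrite !big_ord_recl big_ord0 /= mulg1 Gab Gec mulgA mulgK mulVg.
case: k lt_k2 => [|[|//]] _ /= [eq1 | eq2].
- by apply: (mulIg (gam a)); rewrite Eab eq1.
- by case/eqP: neq_ac; apply/gam_inj/(mulgI g); rewrite Eab Ece eq2.
- by apply: (mulIg (gam c)); rewrite Ece eq1.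
- by rewrite eq2 eqxx in neq_ac.
Qed.

Lemma card_hpartI_le1 g g' : g != g' -> #|hpart gam g :&: hpart gam g'| <= 1.
Proof.
move=> neq_gg'; rewrite leqNgt; apply/card_gt1P => -[x [y []]].
rewrite !in_setI => /andP [/imsetP [a _ ->] /imsetP [b _ Eab]].
move=> /andP [/imsetP [c _ ->] /imsetP [e _ Ece]] neq_xy.
case/eqP: neq_gg'; apply: (condR2_translate_eq Eab Ece).
by apply: contraNneq neq_xy => ->.
Qed.

Lemma htilde_hpart (h : rel 'I_d) : irreflexive h ->
  forall g s t, htilde h gam (g * gam s) (g * gam t) = h s t.
Proof.
move=> h_irr g s t; apply/idP/idP => [|hst]; last first.
  by apply/existsP; exists g; apply/existsP; exists s; apply/existsP; exists t;
     rewrite hst !eqxx.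
move=> /existsP [g' /existsP [i /existsP [j /and3P [hij /eqP Es /eqP Et]]]].
have [eq_st | neq_st] := eqVneq s t.
  have eq_ij : i = j by apply/gam_inj/(mulgI g'); rewrite -Es -Et eq_st.
  by rewrite eq_ij h_irr in hij.
have eq_gg' := condR2_translate_eq Es Et neq_st; rewrite -eq_gg' in Es Et.
by move/mulgI/gam_inj: Es => ->; move/mulgI/gam_inj: Et => ->.
Qed.

Lemma is_cluster_hpart (h : rel 'I_d) :
  0 < d -> is_cluster (htilde h gam) (hpart gam).
Proof.
move=> lt0d; split=> [v | x y | g g'].
- pose i0 := Ordinal lt0d.
  by exists (v * (gam i0)^-1); apply/imsetP; exists i0; rewrite ?mulgKV.
- move=> /existsP [g /existsP [i /existsP [j /and3P [_ /eqP -> /eqP ->]]]].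
  by exists g; split; apply/imsetP; [exists i | exists j].
- exact: card_hpartI_le1.
Qed.

Lemma iso_to_induced_hpart (h : rel 'I_d) g :
  irreflexive h -> iso_to_induced h (htilde h gam) (hpart gam g).
Proof.
move=> h_irr; exists (fun t => g * gam t).
by split=> [s t /mulgI/gam_inj // | // | s t]; rewrite htilde_hpart.
Qed.

End TranslatedCopies.

Section ClusterGirth.
Variables (gT : finGroupType) (d : nat) (gam : 'I_d -> gT).

Lemma hpart_choice l (x u : nat -> gT) : 0 < l ->
  (forall j, j < l -> u j \in hpart gam (x j)) ->
  exists a : nat -> 'I_d, forall j, j < l -> u j = x j * gam (a j).
Proof.
move=> lt0l ux; have [i0 _ _] := imsetP (ux 0 lt0l).
exists (fun j => odflt i0 [pick i | u j == x j * gam i]) => j lt_jl.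
case: pickP => [i /eqP // | no_i].
by have [i _ Ei] := imsetP (ux j lt_jl); move: (no_i i); rewrite -Ei eqxx.
Qed.

Lemma no_cluster_cycle l : 1 < l -> condR gam l -> ~ cluster_cycle (hpart gam) l.
Proof.
move=> lt1l HR [v [idx [v_inj idx_inj v_in]]].
have lt0l : 0 < l by lia.
pose y j := idx (cpred l j).
have [a Ha] : exists a : nat -> 'I_d, forall j, j < l -> v j = y j * gam (a j).
  by apply: hpart_choice => // j /v_in [].
have [b Hb] : exists b : nat -> 'I_d, forall j, j < l -> v j = idx j * gam (b j).
  by apply: hpart_choice => // j /v_in [].
have yS k : k < l -> y k.+1 = idx k by move=> lt_kl; rewrite /y cpredS.
have [|k lt_kl [eq_ab | eq_ba]] := (condR_interleave HR (a := a) (b := b)).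
- have gamab k : k < l -> gam (a k) * (gam (b k))^-1 = (y k)^-1 * y k.+1.
    move=> lt_kl; rewrite yS // -(mulKg (y k) (gam (a k))) -Ha //.
    by rewrite Hb // !mulgA mulgK.
  rewrite (eq_bigr (fun k : 'I_l => (y k)^-1 * y k.+1)) => [|k _]; last exact: gamab.
  rewrite prod_telescope (_ : y l = y 0) ?mulVg // /y /cpred add0n.
  by rewrite (_ : (l + l).-1 = l.-1 + l) ?modnDr //; lia.
- have eq_idx : y k = idx k by apply: (mulIg (gam (a k))); rewrite -Ha // eq_ab -Hb.
  have lt_pred : cpred l k < l by rewrite ltn_pmod.
  by move/eqP: (cpred_neq lt1l lt_kl); rewrite (idx_inj _ _ lt_pred lt_kl eq_idx).
- have lt_Skl : k.+1 %% l < l by rewrite ltn_pmod.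
  have eq_v : v (k.+1 %% l) = v k by rewrite Ha // -eq_ba /y cpred_modS // -Hb.
  have eq_k := v_inj _ _ lt_Skl lt_kl eq_v.
  by move: (cpred_neq lt1l lt_kl); rewrite -{1}eq_k cpred_modS // eqxx.
Qed.

End ClusterGirth.

Theorem proposition5p3 (gT : finGroupType) (d : nat) (h : rel 'I_d)
  (gam : 'I_d -> gT)
  (h_sym : symmetric h) (h_irr : irreflexive h)
  (h_nonempty : 0 < d) (h_conn : forall i j, connect h i j)
  (gam_inj : injective gam) :
  (* a) *)
  (condG gam 2 ->
     is_cluster (htilde h gam) (hpart gam)
     /\ (forall g : gT, iso_to_induced h (htilde h gam) (hpart gam g)))
  /\
  (* b) *)
  (forall p, 1 <= p -> condG gam p -> cluster_girth_ge (hpart gam) p.+1)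
  /\
  (* c) *)
  ((forall x y : gT, iso_induced (htilde h gam)
                       (component (htilde h gam) x) (component (htilde h gam) y))
   /\ exists K : {group gT},
        is_cayley_graph_of (htilde h gam) (component (htilde h gam) 1) K).
Proof.
split=> [HG | ].
  have HR2 : condR gam 2 by apply: HG.
  split; first exact: is_cluster_hpart.
  by move=> g; apply: iso_to_induced_hpart.
split=> [p lt0p HG l le3l lt_lp | ].
  by apply: no_cluster_cycle => //; [lia | apply: HG; lia].
split; first exact: iso_induced_component.
exists (Group (group_set_component1 h gam)); split=> //.
exists (connection_set h gam); split.
- exact: connection_set_sub_component1.
- exact: invg_connection_set.
- exact: one_notin_connection_set.
- by move=> u w _ _; apply: htildeE.
Qed.
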